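(* For every integer $K\ge1$, $$s(4,K,2)=\begin{cases}\left\lceil\frac{2K}{3}\right\rceil & \text{if } K\equiv 0,2 \text{ or } 5 \pmod 6,\\[2pt] \left\lceil\frac{2K}{3}\right\rceil+1 & \text{otherwise.}\end{cases}$$
   Context: A placement delivery array $S$-PDA$(F,K,Z)$ is an $F\times K$ array $R=(r_{j,k})$, $1\le j\le F$, $1\le k\le K$, over a finite set $S$ such that: (1) each cell is either empty or contains an element of $S$; (2) each column contains exactly $Z$ empty cells; (3) each element of $S$ occurs at most once in each row and at most once in each column; (4) if two distinct nonempty cells satisfy $r_{j_1,k_1}=r_{j_2,k_2}=t\in S$, then the cells $r_{j_1,k_2}$ and $r_{j_2,k_1}$ are empty. For integers $F,K\ge1$, $0\le Z\le F$, define $s(F,K,Z)=\min\{|S| : \text{there exists an } S\text{-PDA}(F,K,Z)\}$. *)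

From mathcomp Require Import all_boot.
Set Implicit Arguments. Unset Strict Implicit. Unset Printing Implicit Defensive.

(* A placement delivery array S-PDA(F,K,Z): an F x K array over the finite set S,
   cells are [None] (empty) or [Some t] with t in S. *)
Definition is_PDA (F K Z : nat) (S : finType) (R : 'I_F -> 'I_K -> option S) : Prop :=
  (forall k : 'I_K, #|[set j : 'I_F | R j k == None]| = Z) /\
  (forall (j : 'I_F) (k1 k2 : 'I_K) (t : S),
      R j k1 = Some t -> R j k2 = Some t -> k1 = k2) /\
  (forall (j1 j2 : 'I_F) (k : 'I_K) (t : S),
      R j1 k = Some t -> R j2 k = Some t -> j1 = j2) /\
  (forall (j1 j2 : 'I_F) (k1 k2 : 'I_K) (t : S),
      (j1, k1) <> (j2, k2) -> R j1 k1 = Some t -> R j2 k2 = Some t ->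
      R j1 k2 = None /\ R j2 k1 = None).

Definition is_min_PDA_symbols (F K Z n : nat) : Prop :=
  (exists R : 'I_F -> 'I_K -> option 'I_n, is_PDA Z R) /\
  (forall (S : finType) (R : 'I_F -> 'I_K -> option S), is_PDA Z R -> n <= #|S|).

From mathcomp Require Import all_boot ssralg ssrint intdiv zify.

(* With Z = F - 2 every column has exactly two filled cells, so each
   occurrence of a symbol t is partnered with the other filled cell of its
   column, and condition (4) forbids t in the partner's row; in particular t
   occurs in at most F - 1 rows.  Give t the weight [occ - partners] at a row
   z, where occ says whether t occurs in z and partners counts the
   occurrences of t partnered with a cell of z.  Every filled cell is both an
   occurrence and a partner, so the weights of all symbols sum to 0 at every
   row.  A symbol in F - 1 rows has weight 1 mod F at every row, while a
   symbol in between 1 and F - 2 rows has a non-constant weight mod F.  For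
   F = 4, counting filled cells gives 3 |S| = 2 K + D with
   D = sum_t (3 - rows of t); D = 0 forces 4 | |S| and D = 1 is impossible,
   which yields the lower bound.  The upper bound glues copies of a 4 x 6
   array on 4 symbols to a small array for the remaining columns. *)

Set Implicit Arguments. Unset Strict Implicit. Unset Printing Implicit Defensive.
Import GRing.Theory.

Lemma sum_nat_bool (I : finType) (P : pred I) : \sum_i (P i : nat) = #|P|.
Proof.
rewrite -sum1_card [RHS]big_mkcond.
by apply: eq_bigr => i _; rewrite unfold_in; case: (P i).
Qed.

Lemma sum_eq_Some (T : finType) (o : option T) : \sum_t (o == Some t : nat) = (o != None).
Proof.
case: o => [u|] /=; last by rewrite big1.
rewrite (bigD1 u) //= eqxx big1 // => t /negbTE ut.
by rewrite -[_ == _]/(u == t) eq_sym ut.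
Qed.

Section SymbolCounting.

Variables (F K Z : nat) (S : finType) (R : 'I_F -> 'I_K -> option S).
Hypotheses (R_PDA : is_PDA Z R) (two_filled : Z.+2 = F).

Let row_uniq := proj1 (proj2 R_PDA).
Let cross_empty := proj2 (proj2 (proj2 R_PDA)).

Lemma sum_filled_col k : \sum_j (R j k != None : nat) = 2.
Proof.
have := cardsC [set j | R j k == None].
rewrite (proj1 R_PDA) card_ord sum_nat_bool => sumF.
suff -> : #|(fun j => R j k != None)| = #|~: [set j | R j k == None]|.
  by move: two_filled; lia.
by apply: eq_card => j; rewrite !inE.
Qed.

Lemma sum_filled_other k x : R x k != None ->
  \sum_(z | z != x) (R z k != None : nat) = 1.
Proof. by move=> xk; have := sum_filled_col k; rewrite (bigD1 x) //= xk => -[]. Qed.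

Definition occ (t : S) (z : 'I_F) := [exists k, R z k == Some t].

Definition mult t := #|occ t|.

Definition partners t z :=
  \sum_k \sum_x [&& x != z, R z k != None & R x k == Some t].

Definition weight t z : int := ((occ t z : nat)%:Z - (partners t z)%:Z)%R.

Lemma occ_sum t z : (occ t z : nat) = \sum_k (R z k == Some t : nat).
Proof.
rewrite /occ; case: existsP => [[k /eqP zk] | no_k]; last first.
  by rewrite big1 // => k _; case: eqP => // zk; case: no_k; exists k; apply/eqP.
rewrite (bigD1 k) //= zk eqxx big1 // => k' /negbTE k'k.
by case: eqP => // /(row_uniq zk) kk'; rewrite kk' eqxx in k'k.
Qed.

Lemma sum_occ z : \sum_t (occ t z : nat) = \sum_k (R z k != None : nat).
Proof.
rewrite (eq_bigr _ (fun t _ => occ_sum t z)) exchange_big.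
by apply: eq_bigr => k _; apply: sum_eq_Some.
Qed.

Lemma sum_partners z : \sum_t partners t z = \sum_k (R z k != None : nat).
Proof.
rewrite /partners exchange_big; apply: eq_bigr => k _; rewrite exchange_big /=.
have [zk | _] := boolP (R z k != None); last first.
  by apply: big1 => x _; apply: big1 => t _; rewrite andbF.
rewrite /= -(sum_filled_other zk) [RHS]big_mkcond; apply: eq_bigr => x _.
by case: (x != z); rewrite /= ?sum_eq_Some // big1.
Qed.

Lemma sum_weight z : (\sum_t weight t z = 0)%R.
Proof.
rewrite sumrB -!(big_morph Posz PoszD (erefl (Posz 0))).
by rewrite sum_occ sum_partners subrr.
Qed.

Lemma partners_occ t z : occ t z -> partners t z = 0.
Proof.
case/existsP => k' /eqP zk'; apply: big1 => k _; apply: big1 => x _.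
apply/eqP; rewrite eqb0; apply/and3P => [[xz /negP + /eqP xk]]; apply.
have xkz : (x, k) <> (z, k') by case=> /eqP; rewrite (negbTE xz).
by rewrite (proj2 (cross_empty xkz xk zk')).
Qed.

Lemma sum_partners_rows t : \sum_z partners t z = mult t.
Proof.
rewrite /partners exchange_big /mult -sum_nat_bool.
rewrite (eq_bigr _ (fun x _ => occ_sum t x)) [RHS]exchange_big /=.
apply: eq_bigr => k _; rewrite exchange_big; apply: eq_bigr => x _.
have [xk | _] := eqVneq (R x k) (Some t); last first.
  by apply: big1 => z _; rewrite !andbF.
have x_filled : R x k != None by rewrite xk.
rewrite /= -(sum_filled_other x_filled) [RHS]big_mkcond.
by apply: eq_bigr => z _; rewrite eq_sym andbT; case: (z != x).
Qed.

Lemma mult_partners t : mult t = \sum_(z | ~~ occ t z) partners t z.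
Proof.
rewrite -sum_partners_rows (bigID (occ t)) /= big1 // => z.
exact: partners_occ.
Qed.

Lemma card_predC_occ t : #|[predC occ t]| = F - mult t.
Proof. by rewrite -[in F - _](card_ord F) -(cardC (occ t)) addKn. Qed.

Lemma mult_le t : mult t <= F.-1.
Proof.
case: (posnP #|[predC occ t]|) => [none | ]; last by rewrite card_predC_occ; lia.
have -> : mult t = 0.
  rewrite mult_partners big_pred0 // => z.
  by have := card0_eq none z; rewrite !inE.
by move: two_filled; lia.
Qed.

Lemma sum_mult : \sum_t mult t = 2 * K.
Proof.
rewrite (eq_bigr _ (fun t _ => esym (sum_nat_bool (occ t)))) exchange_big /=.
rewrite (eq_bigr _ (fun z _ => sum_occ z)) exchange_big /=.
by rewrite (eq_bigr _ (fun k _ => sum_filled_col k)) sum_nat_const card_ord mulnC.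
Qed.

Local Open Scope ring_scope.

Lemma full_weight_congr1 t : mult t = F.-1 -> forall z, (F %| weight t z - 1)%Z.
Proof.
move=> full z; rewrite /weight.
have [occ_z | free_z] := boolP (occ t z).
  by rewrite partners_occ // subr0 subrr dvdz0.
have one_free : #|[predC occ t]| = 1%N.
  by rewrite card_predC_occ full; move: two_filled; lia.
have [z0 free] := mem_card1 one_free.
have z0z : z0 = z by have := free z; rewrite !inE free_z => /esym/eqP.
have -> : partners t z = F.-1%N.
  rewrite -full mult_partners (eq_bigl (pred1 z)) ?big_pred1_eq // => z'.
  by have := free z'; rewrite !inE z0z.
have -> : (false : nat)%:Z - (F.-1)%:Z - 1 = - F%:Z by move: two_filled; lia.
by rewrite rpredN dvdzz.
Qed.

Lemma partial_weight_nonconst t : (0 < mult t < F.-1)%N ->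
  exists x z, ~~ (F %| weight t x - weight t z)%Z.
Proof.
case/andP=> used partial.
have [x occ_x] := card_gt0P used.
have [z free_z] : exists z, z \in [predC occ t].
  by apply/card_gt0P; rewrite card_predC_occ; lia.
have few_partners : (partners t z <= mult t)%N.
  by rewrite mult_partners (bigD1 z) ?leq_addr.
have {}occ_x : occ t x := occ_x; have {}free_z : ~~ occ t z := free_z.
exists x, z; rewrite /weight (partners_occ occ_x) occ_x (negbTE free_z).
have -> : 1%:Z - 0%:Z - (0%:Z - (partners t z)%:Z) = (partners t z).+1%:Z by lia.
by rewrite dvdzE /= gtnNdvd //; lia.
Qed.

Lemma all_full_dvd_card : (forall t, mult t = F.-1) -> (F %| #|S|)%N.
Proof.
move=> full; have F_gt0 : (0 < F)%N by rewrite -two_filled.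
pose z := Ordinal F_gt0.
have : (F %| \sum_t (weight t z - 1))%Z.
  by apply: rpred_sum => t _; apply: full_weight_congr1.
by rewrite sumrB sum_weight sumr_const sub0r rpredN natz dvdzE.
Qed.

Lemma all_but_one_full t0 : (forall t, t != t0 -> mult t = F.-1) ->
  mult t0 = 0%N \/ mult t0 = F.-1.
Proof.
move=> full; have := mult_le t0.
case: (posnP (mult t0)) => [-> | used] le; [by left | right].
apply/eqP; rewrite eqn_leq le leqNgt; apply/negP => partial.
have used_partial : (0 < mult t0 < F.-1)%N by rewrite used partial.
have [x [z /negP]] := partial_weight_nonconst used_partial; apply.
have sum_diff : weight t0 x - weight t0 z =
    \sum_(t | t != t0) ((weight t z - 1) - (weight t x - 1)).
  rewrite (eq_bigr (fun t => weight t z - weight t x)) => [|t _]; last lia.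
  have := sum_weight x; rewrite (bigD1 t0) //= => /eqP; rewrite addr_eq0 => /eqP ->.
  have := sum_weight z; rewrite (bigD1 t0) //= => /eqP; rewrite addr_eq0 => /eqP ->.
  by rewrite opprK addrC -sumrB.
rewrite sum_diff; apply: rpred_sum => t t_t0.
by rewrite rpredB ?full_weight_congr1 ?full.
Qed.

End SymbolCounting.

Section Constructions.

Variables (F Z : nat).

Definition pda_exists K n := exists R : 'I_F -> 'I_K -> option 'I_n, is_PDA Z R.

Lemma relabel_PDA K (S S' : finType) (f : S -> S') (R : 'I_F -> 'I_K -> option S) :
  injective f -> is_PDA Z R -> is_PDA Z (fun j k => omap f (R j k)).
Proof.
move=> f_inj [empty [row [col cross]]].
have omap_None o : (omap f o == None) = (o == None) by case: o.
have omap_Some o t' : omap f o = Some t' -> exists2 t, o = Some t & t' = f t.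
  by case: o => //= t [<-]; exists t.
split; [|split; [|split]].
- by move=> k; rewrite -(empty k); apply: eq_card => j; rewrite !inE omap_None.
- move=> j k1 k2 _ /omap_Some [t1 E1 ->] /omap_Some [t2 E2 /f_inj E]; subst t2.
  exact: row E1 E2.
- move=> j1 j2 k _ /omap_Some [t1 E1 ->] /omap_Some [t2 E2 /f_inj E]; subst t2.
  exact: col E1 E2.
- move=> j1 j2 k1 k2 _ ne /omap_Some [t1 E1 ->] /omap_Some [t2 E2 /f_inj E]; subst t2.
  by have [-> ->] := cross _ _ _ _ _ ne E1 E2.
Qed.

Lemma restrict_PDA K K' (S : finType) (R : 'I_F -> 'I_K -> option S) (le_KK' : K' <= K) :
  is_PDA Z R -> is_PDA Z (fun j (k : 'I_K') => R j (widen_ord le_KK' k)).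
Proof.
move=> [empty [row [col cross]]]; split; [|split; [|split]].
- by move=> k; apply: empty.
- by move=> j k1 k2 t E1 E2; apply: val_inj; have := row _ _ _ _ E1 E2 => -[].
- by move=> j1 j2 k t; apply: col.
- move=> j1 j2 k1 k2 t ne; apply: cross => -[j12 /val_inj k12].
  by apply: ne; rewrite j12 k12.
Qed.

Definition concat_cols K1 K2 (S1 S2 : finType)
    (R1 : 'I_F -> 'I_K1 -> option S1) (R2 : 'I_F -> 'I_K2 -> option S2) :
    'I_F -> 'I_(K1 + K2) -> option (S1 + S2) :=
  fun j k => match split k with
             | inl k1 => omap inl (R1 j k1)
             | inr k2 => omap inr (R2 j k2)
             end.

Lemma concat_PDA K1 K2 (S1 S2 : finType)
    (R1 : 'I_F -> 'I_K1 -> option S1) (R2 : 'I_F -> 'I_K2 -> option S2) :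
  is_PDA Z R1 -> is_PDA Z R2 -> is_PDA Z (concat_cols R1 R2).
Proof.
move=> [empty1 [row1 [col1 cross1]]] [empty2 [row2 [col2 cross2]]].
have unsplitP (k : 'I_(K1 + K2)) : exists u, k = unsplit u.
  by exists (split k); rewrite splitK.
split; [|split; [|split]].
- move=> k; have [[k1|k2] ->] := unsplitP k; rewrite /concat_cols unsplitK;
  [rewrite -(empty1 k1) | rewrite -(empty2 k2)];
  by apply: eq_card => j; rewrite !inE; case: (_ j _).
- move=> j k k' t; have [u ->] := unsplitP k; have [u' ->] := unsplitP k'.
  rewrite /concat_cols !unsplitK.
  case: u => a; case: u' => a';
  case E: (_ j a) => [s|] //=; case E': (_ j a') => [s'|] //= <- // [s's]; subst s'.
  + by rewrite (row1 _ _ _ _ E E').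
  + by rewrite (row2 _ _ _ _ E E').
- move=> j j' k t; have [u ->] := unsplitP k; rewrite /concat_cols unsplitK.
  case: u => a;
  case E: (_ j a) => [s|] //=; case E': (_ j' a) => [s'|] //= <- // [s's]; subst s'.
  + exact: col1 E E'.
  + exact: col2 E E'.
- move=> j j' k k' t; have [u ->] := unsplitP k; have [u' ->] := unsplitP k'.
  rewrite /concat_cols !unsplitK => ne.
  case: u ne => a; case: u' => a' ne;
  case E: (_ j a) => [s|] //=; case E': (_ j' a') => [s'|] //= <- // [s's]; subst s'.
  + have ne' : (j, a) <> (j', a') by case=> jj' aa'; apply: ne; rewrite jj' aa'.
    by have [-> ->] := cross1 _ _ _ _ _ ne' E E'.
  + have ne' : (j, a) <> (j', a') by case=> jj' aa'; apply: ne; rewrite jj' aa'.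
    by have [-> ->] := cross2 _ _ _ _ _ ne' E E'.
Qed.

Lemma pda_exists0 : pda_exists 0 0.
Proof. by exists (fun _ _ => None); split; [case | split; [|split]]. Qed.

Lemma pda_exists_le K K' n : K' <= K -> pda_exists K n -> pda_exists K' n.
Proof.
move=> le_KK' [R R_PDA].
by exists (fun j k => R j (widen_ord le_KK' k)); apply: restrict_PDA.
Qed.

Lemma pda_exists_add K1 K2 n1 n2 :
  pda_exists K1 n1 -> pda_exists K2 n2 -> pda_exists (K1 + K2) (n1 + n2).
Proof.
move=> [R1 R1_PDA] [R2 R2_PDA].
exists (fun j k => omap unsplit (concat_cols R1 R2 j k)).
exact/relabel_PDA/concat_PDA/R2_PDA/R1_PDA/(can_inj (@unsplitK n1 n2)).
Qed.

End Constructions.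

Lemma count_enum (T : finType) (P : pred T) : count P (enum T) = #|P|.
Proof.
rewrite cardE /enum_mem -size_filter -filter_predI; congr size.
by apply: eq_filter => x; rewrite !inE andbT.
Qed.

(* Unlike [enum 'I_n], which goes through the opaque [idP], [ords n] reduces
   under [vm_compute]. *)
Fixpoint ords n : seq 'I_n :=
  if n is n'.+1 then ord0 :: map (lift ord0) (ords n') else [::].

Lemma ords_enum n : ords n = enum 'I_n.
Proof.
apply: (inj_map val_inj); rewrite val_enum_ord.
elim: n => //= n IH; rewrite -map_comp.
by rewrite (eq_map (g := succn \o val)) // map_comp IH -(addn0 1) iotaDl.
Qed.

Definition pda_check F K Z n (R : 'I_F -> 'I_K -> option 'I_n) : bool :=
  let all_ord m P := all P (ords m) in
  [&& all_ord K (fun k => count (fun j => R j k == None) (ords F) == Z),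
      all_ord F (fun j => all_ord K (fun k1 => all_ord K (fun k2 =>
        (R j k1 != None) ==> (R j k1 == R j k2) ==> (k1 == k2)))),
      all_ord F (fun j1 => all_ord F (fun j2 => all_ord K (fun k =>
        (R j1 k != None) ==> (R j1 k == R j2 k) ==> (j1 == j2)))) &
      all_ord F (fun j1 => all_ord F (fun j2 => all_ord K (fun k1 => all_ord K (fun k2 =>
        [&& R j1 k1 != None, R j1 k1 == R j2 k2 & (j1, k1) != (j2, k2)] ==>
        (R j1 k2 == None) && (R j2 k1 == None)))))].

Lemma pda_checkP F K Z n (R : 'I_F -> 'I_K -> option 'I_n) :
  pda_check Z R -> is_PDA Z R.
Proof.
have allP' m (P : pred 'I_m) : all P (ords m) -> forall i, P i.
  by rewrite ords_enum => /allP P_all i; apply: P_all; rewrite mem_enum.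
case/and4P => /allP' empty /allP' row /allP' col /allP' cross.
split; [|split; [|split]].
- move=> k; rewrite -(eqP (empty k)) ords_enum count_enum.
  by apply: eq_card => j; rewrite inE.
- move=> j k1 k2 t E1 E2; apply/eqP.
  by have /allP'/(_ k2) := allP' _ _ (row j) k1; rewrite E1 E2 eqxx.
- move=> j1 j2 k t E1 E2; apply/eqP.
  by have /allP'/(_ k) := allP' _ _ (col j1) j2; rewrite E1 E2 eqxx.
- move=> j1 j2 k1 k2 t ne E1 E2.
  have /allP'/(_ k2) := allP' _ _ (allP' _ _ (cross j1) j2) k1.
  have -> : (j1, k1) != (j2, k2) by apply/eqP.
  by rewrite E1 E2 eqxx => /andP[/eqP -> /eqP ->].
Qed.

(* Entry [0] of a table is an empty cell, entry [c.+1] is the symbol [c]. *)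
Definition table K n (tab : seq (seq nat)) (j : 'I_4) (k : 'I_K) : option 'I_n :=
  nth None (None :: map Some (ords n)) (nth 0 (nth [::] tab j) k).

Lemma pda_exists_2_2 : pda_exists 4 2 2 2.
Proof.
exists (table 2 [:: [:: 1; 0]; [:: 2; 0]; [:: 0; 1]; [:: 0; 2]]).
by apply: pda_checkP; vm_compute.
Qed.

Lemma pda_exists_3_3 : pda_exists 4 2 3 3.
Proof.
exists (table 3 [:: [:: 1; 0; 3]; [:: 2; 0; 0]; [:: 0; 1; 2]; [:: 0; 3; 0]]).
by apply: pda_checkP; vm_compute.
Qed.

Lemma pda_exists_6_4 : pda_exists 4 2 6 4.
Proof.
exists (table 4 [:: [:: 2; 3; 4; 0; 0; 0]; [:: 1; 0; 0; 3; 4; 0];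
                   [:: 0; 1; 0; 2; 0; 4]; [:: 0; 0; 1; 0; 2; 3]]).
by apply: pda_checkP; vm_compute.
Qed.

Lemma pda_exists_blocks q : pda_exists 4 2 (6 * q) (4 * q).
Proof.
elim: q => [|q IH]; first exact: pda_exists0.
by rewrite !mulnS; apply: pda_exists_add pda_exists_6_4 IH.
Qed.

Definition s4K2 K :=
  if (K %% 6 == 0) || (K %% 6 == 2) || (K %% 6 == 5)
  then (2 * K + 2) %/ 3
  else (2 * K + 2) %/ 3 + 1.

Lemma s4K2_le_of_defect K N D :
  3 * N = 2 * K + D -> (D = 0 -> 4 %| N) -> D <> 1 -> s4K2 K <= N.
Proof.
rewrite /s4K2; have := ltn_pmod K (isT : 0 < 6).
case: (K %% 6) (divn_eq K 6) => [|[|[|[|[|[|r]]]]]] //= K_eq _.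
all: case: D => [|[|D]] card_eq div4 not1; try lia.
all: have := div4 erefl; lia.
Qed.

Lemma s4K2_le_card K (S : finType) (R : 'I_4 -> 'I_K -> option S) :
  is_PDA 2 R -> s4K2 K <= #|S|.
Proof.
move=> R_PDA; have two_filled : 2.+2 = 4 by [].
have mult_le3 t : mult R t <= 3 := mult_le R_PDA two_filled t.
apply: (@s4K2_le_of_defect _ _ (\sum_t (3 - mult R t))).
- have -> : 3 * #|S| = \sum_(t : S) 3 by rewrite sum_nat_const mulnC.
  rewrite -(sum_mult R_PDA two_filled) -big_split /=.
  by apply: eq_bigr => t _; have := mult_le3 t; lia.
- move/eqP; rewrite sum_nat_eq0 => /forallP no_defect.
  apply: (all_full_dvd_card R_PDA two_filled) => t.
  by have := mult_le3 t; have /eqP := no_defect t; lia.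
case: (pickP (fun t => 3 - mult R t != 0)) => [t0 t0_defect | no_defect]; last first.
  by rewrite big1 // => t _; apply/eqP; rewrite -[_ == 0]negbK no_defect.
rewrite (bigD1 t0) //= => one.
have /eqP : \sum_(t | t != t0) (3 - mult R t) = 0 by lia.
rewrite sum_nat_eq0 => /forallP others_full.
have [] := all_but_one_full R_PDA two_filled (t0 := t0).
- by move=> t t_t0; have := mult_le3 t; have := others_full t; rewrite t_t0 => /eqP; lia.
all: lia.
Qed.

Lemma s4K2_achieved K : pda_exists 4 2 K (s4K2 K).
Proof.
have weaken K1 n1 K2 n2 :
    pda_exists 4 2 K1 n1 -> K2 <= K1 -> n2 = n1 -> pda_exists 4 2 K2 n2.
  by move=> PDA le_K ->; apply: pda_exists_le PDA.
rewrite /s4K2; move: (K %/ 6) (K %% 6) (divn_eq K 6) (ltn_pmod K (isT : 0 < 6)).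
move=> q r -> /=; case: r => [|[|[|[|[|[|r]]]]]] //= _.
- apply: weaken (pda_exists_blocks q) _ _; lia.
- apply: weaken (pda_exists_add (pda_exists_blocks q) pda_exists_2_2) _ _; lia.
- apply: weaken (pda_exists_add (pda_exists_blocks q) pda_exists_2_2) _ _; lia.
- apply: weaken (pda_exists_add (pda_exists_blocks q) pda_exists_3_3) _ _; lia.
- apply: weaken (pda_exists_blocks q.+1) _ _; lia.
- apply: weaken (pda_exists_blocks q.+1) _ _; lia.
Qed.

Theorem mainTheorem14 (K : nat) : 1 <= K ->
  is_min_PDA_symbols 4 K 2
    (if (K %% 6 == 0) || (K %% 6 == 2) || (K %% 6 == 5)
     then (2 * K + 2) %/ 3
     else (2 * K + 2) %/ 3 + 1).
Proof.
move=> _; split; first exact: s4K2_achieved.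
by move=> S R; apply: s4K2_le_card.
Qed.
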